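(* Let $G_{P,\mathcal{K}}$ be the closure under R1–R4 of a pattern $P$ with consistent background knowledge $\mathcal{K}$, and let $x\to y$ in $G_{P,\mathcal{K}}$. Then there exists a consistent DAG extension of $G_{P,\mathcal{K}}$ in which every edge that is undirected in $G_{P,\mathcal{K}}$ and incident to $x$ or $y$ is oriented out of $x$ or out of $y$, respectively.
   Context: A PDAG is a graph with directed and undirected edges and no directed cycle. The pattern of a DAG is the graph with the same skeleton in which an edge is directed iff it belongs to a v-structure (a triple $a\to c\leftarrow b$ with $a,b$ non-adjacent). A consistent DAG extension of a PDAG $G$ is a DAG with the same skeleton, the same orientation of every directed edge of $G$, and no v-structures other than those of $G$. A set $\mathcal{K}$ of orientations of undirected edges of $P$ is consistent background knowledge if some DAG with pattern $P$ contains all of them. $G_{P,\mathcal{K}}$ is obtained from $P$ by orienting the edges in $\mathcal{K}$ and then repeatedly applying until none applies: R1: if $k\to i$, $i - j$, $k,j$ non-adjacent, orient $i\to j$; R2: if $i\to k\to j$ and $i - j$, orient $i\to j$; R3: if $i - k$, $i - l$, $i - j$, $k\to j$, $l\to j$, $k,l$ non-adjacent, orient $i\to j$; R4: if $i - k$, $i - l$, $i - j$, $k\to l\to j$, $k,j$ non-adjacent, orient $i\to j$. *)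

(* Graphs on a finite vertex type T, encoded by a mark relation
   g : rel T:  a -> b  iff  g a b && ~~ g b a ;  a - b  iff  g a b && g b a ;
   a, b adjacent iff g a b || g b a. *)
From mathcomp Require Import all_boot.
Set Implicit Arguments. Unset Strict Implicit. Unset Printing Implicit Defensive.

Section Graphs.
Variable T : finType.
Implicit Types (g D P K : rel T).

Definition dir g a b := g a b && ~~ g b a.
Definition und g a b := g a b && g b a.
Definition adj g a b := g a b || g b a.

Definition vstruct g a c b := [&& dir g a c, dir g b c, a != b & ~~ adj g a b].

(* a DAG: a relation of directed edges without directed cycles
   (this also forces irreflexivity and asymmetry) *)
Definition dag D := forall a b, D a b -> ~~ connect D b a.

Definition pdag g := irreflexive g /\ forall a b, dir g a b -> ~~ connect (dir g) b a.

Definition in_vstruct D a c := D a c && [exists b, [&& D b c, b != a & ~~ adj D a b]].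

(* the pattern of a DAG D: same skeleton, edge directed iff in a v-structure *)
Definition pattern_of D : rel T := fun a b => adj D a b && ~~ in_vstruct D b a.

Definition is_pattern P := exists D, dag D /\ pattern_of D =2 P.

(* K (a b) means: the orientation a -> b of the undirected edge a - b of P *)
Definition consistent_bk P K :=
  (forall a b, K a b -> und P a b) /\
  exists D, [/\ dag D, pattern_of D =2 P & forall a b, K a b -> D a b].

Definition orientK P K : rel T := fun a b => P a b && ~~ K b a.

Definition orient g i j : rel T := fun a b => g a b && ~~ ((a == j) && (b == i)).

Definition R1 g i j := und g i j /\ exists k, dir g k i /\ ~~ adj g k j.
Definition R2 g i j := und g i j /\ exists k, dir g i k /\ dir g k j.
Definition R3 g i j := und g i j /\ exists k l,
  [/\ und g i k, und g i l, dir g k j, dir g l j & (k != l) && ~~ adj g k l].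
Definition R4 g i j := und g i j /\ exists k l,
  [/\ und g i k, und g i l, dir g k l & dir g l j /\ ~~ adj g k j].

Definition applicable g i j := R1 g i j \/ R2 g i j \/ R3 g i j \/ R4 g i j.

Definition meek_step g g' := exists i j, applicable g i j /\ g' =2 orient g i j.

Inductive meek_reach : rel T -> rel T -> Prop :=
| meek_refl g : meek_reach g g
| meek_next g g' g'' : meek_step g g' -> meek_reach g' g'' -> meek_reach g g''.

Definition is_closure P K G :=
  meek_reach (orientK P K) G /\ forall i j, ~ applicable G i j.

Definition consistent_ext G D :=
  [/\ dag D,
      forall a b, adj D a b = adj G a b,
      forall a b, dir G a b -> D a b &
      forall a c b, vstruct D a c b -> vstruct G a c b].

End Graphs.

From mathcomp Require Import all_boot.
Set Implicit Arguments. Unset Strict Implicit. Unset Printing Implicit Defensive.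

(* Each Meek rule is sound for any DAG D0 with pattern P containing K, so the
   closure G has the skeleton of D0 and its directed edges are directed as in
   D0.  Hence every nonempty vertex set S has a removable vertex: one with no
   directed edge leaving it inside S and whose undirected neighbours in S are
   pairwise adjacent (a vertex of S with most D0-ancestors).  Ranking a
   removable vertex on top, recursively, yields a rank along which orienting
   every edge upwards is a consistent extension of G.  Closure under R1-R4
   lets the removable vertex avoid any w having an undirected neighbour in S;
   avoiding y while it has one (this also avoids x, as x -> y) and x otherwise
   ranks x and y below all their undirected neighbours.  That choice is proved
   by induction on S through a stronger statement, ranking a suitable clique
   In of undirected neighbours of c below c and the others above c. *)

Lemma setD1_ind (T : finType) (Q : {set T} -> Prop) :
  (forall S : {set T}, (forall x, x \in S -> Q (S :\ x)) -> Q S) -> forall S, Q S.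
Proof.
move=> IH S; move: {2}#|S| (leqnn #|S|) => n.
elim: n S => [|n IHn] S HS; apply: IH => x xS; move: HS; rewrite (cardsD1 x S) xS //.
by rewrite add1n ltnS; apply: IHn.
Qed.

Lemma exists_argmax (T : finType) (S : {set T}) (f : T -> nat) z :
  z \in S -> exists2 v, v \in S & {in S, forall u, f u <= f v}.
Proof. by move=> zS; case: (arg_maxnP f zS) => v vS vmax; exists v. Qed.

Lemma dag_of_rank (T : finType) (D : rel T) (r : T -> nat) :
  (forall a b, D a b -> r a < r b) -> dag D.
Proof.
move=> Dr a b ab; apply/negP => /connectP[p pP ap].
have mono u q : path D u q -> r u <= r (last u q).
  elim: q u => //= c q IHq u /andP[uc cq].
  exact: leq_trans (ltnW (Dr _ _ uc)) (IHq _ cq).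
by move: (mono _ _ pP); rewrite -ap leqNgt Dr.
Qed.

Section Pdag.
Variables (T : finType) (G : rel T).
Hypothesis G_irr : irreflexive G.
Implicit Types (S : {set T}) (r : T -> nat).

Lemma adjC a b : adj G a b = adj G b a.
Proof. by rewrite /adj orbC. Qed.

Lemma undC a b : und G a b = und G b a.
Proof. by rewrite /und andbC. Qed.

Lemma und_adj a b : und G a b -> adj G a b.
Proof. by rewrite /und /adj => /andP[->]. Qed.

Lemma dir_adj a b : dir G a b -> adj G a b.
Proof. by rewrite /dir /adj => /andP[->]. Qed.

Lemma dir_asym a b : dir G a b -> dir G b a = false.
Proof. by rewrite /dir => /andP[-> _]; rewrite andbF. Qed.

Lemma und_dirF a b : und G a b -> dir G a b = false.
Proof. by rewrite /und /dir => /andP[_ ->]; rewrite andbF. Qed.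

Lemma und_neq a b : und G a b -> a != b.
Proof. by rewrite /und; case: eqP => // ->; rewrite G_irr. Qed.

Lemma dir_neq a b : dir G a b -> a != b.
Proof. by rewrite /dir; case: eqP => // ->; rewrite G_irr. Qed.

Lemma adj_cases a b : adj G a b -> [\/ dir G a b, dir G b a | und G a b].
Proof.
rewrite /adj /dir /und; case: (G a b); case: (G b a) => //= _.
- by constructor 3.
- by constructor 1.
- by constructor 2.
Qed.

Definition removable S v :=
  [/\ v \in S, {in S, forall z, ~~ dir G v z} &
      {in S &, forall a b, und G a v -> und G b v -> a != b -> adj G a b}].

(* Orienting the edges of G[S] upwards along [r] keeps the directed edges and
   creates no v-structure out of undirected edges. *)
Definition consistent_rank S r :=
  [/\ {in S &, injective r}, {in S &, forall a b, dir G a b -> r a < r b} &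
      {in S & S & S, forall a b c, und G a c -> und G b c -> a != b ->
         ~~ adj G a b -> ~~ ((r a < r c) && (r b < r c))}].

Definition rank_top S t r z := if z == t then (\max_(w in S :\ t) r w).+1 else r z.

Lemma rank_top_gt S t r z : z \in S :\ t -> r z < rank_top S t r t.
Proof. by move=> zS; rewrite /rank_top eqxx ltnS (leq_bigmax_cond _ zS). Qed.

Lemma rank_topE S t r z : z != t -> rank_top S t r z = r z.
Proof. by rewrite /rank_top => /negbTE ->. Qed.

Lemma consistent_rank0 r : consistent_rank set0 r.
Proof. by split=> [a b|a b|a b c]; rewrite inE. Qed.

Lemma consistent_rank_top S t r : removable S t -> consistent_rank (S :\ t) r ->
  consistent_rank S (rank_top S t r).
Proof.
case=> tS tnd tcl [rinj rdir rund].
have inD z : z \in S -> z != t -> z \in S :\ t by move=> zS zt; rewrite in_setD1 zt.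
have topE z : z \in S -> z != t -> rank_top S t r z < rank_top S t r t.
  by move=> zS zt; rewrite rank_topE // rank_top_gt // inD.
split.
- move=> a b aS bS.
  have [->|aNt] := eqVneq a t; have [->|bNt] := eqVneq b t => //.
  + by move=> E; have := topE b bS bNt; rewrite E ltnn.
  + by move=> E; have := topE a aS aNt; rewrite E ltnn.
  + by rewrite !rank_topE //; apply: rinj; rewrite ?inD.
- move=> a b aS bS ab.
  have [eat|aNt] := eqVneq a t; first by move: (tnd b bS); rewrite -eat ab.
  have [->|bNt] := eqVneq b t; first exact: topE.
  by rewrite !rank_topE //; apply: rdir; rewrite ?inD.
- move=> a b c aS bS cS ac bc ab nab.
  have [ect|cNt] := eqVneq c t; first by move: nab; rewrite tcl // -ect.
  have [->|aNt] := eqVneq a t; first by rewrite ltnNge ltnW // topE.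
  have [->|bNt] := eqVneq b t; first by rewrite andbC ltnNge ltnW // topE.
  by rewrite !rank_topE //; apply: rund; rewrite ?inD.
Qed.

Lemma removable_rank_max S r v : consistent_rank S r -> v \in S ->
  {in S, forall z, r z <= r v} -> removable S v.
Proof.
case=> rinj rdir rund vS vmax; split=> // [z zS|a b aS bS av bv ab].
  by apply/negP => /(rdir _ _ vS zS); rewrite ltnNge vmax.
have below u : u \in S -> und G u v -> r u < r v.
  move=> uS uv; rewrite ltn_neqAle vmax // andbT.
  by apply: contraTneq (und_neq uv) => /rinj ->; rewrite ?eqxx.
apply/negPn/negP => nab.
by move: (rund a b v aS bS vS av bv ab nab); rewrite !below.
Qed.

Lemma removable_setD1_nadj S x v :
  removable (S :\ x) v -> ~~ adj G v x -> removable S v.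
Proof.
case=> /setD1P[_ vS] vnd vcl nvx; split=> // [z zS|a b aS bS av bv ab].
  have [->|zx] := eqVneq z x; first by apply: contra nvx; apply: dir_adj.
  by apply: vnd; rewrite in_setD1 zx.
have [ax|ax] := eqVneq a x; first by move: nvx; rewrite adjC -ax und_adj.
have [bx|bx] := eqVneq b x; first by move: nvx; rewrite adjC -bx und_adj.
by apply: vcl; rewrite ?in_setD1 ?ax ?bx.
Qed.

Lemma removable_setD1_und S x v : removable (S :\ x) v -> und G x v ->
  {in S :\ x, forall o, und G o v -> adj G o x} -> removable S v.
Proof.
case=> /setD1P[_ vS] vnd vcl xv near; split=> // [z zS|a b aS bS av bv ab].
  have [->|zx] := eqVneq z x; first by rewrite und_dirF // undC.
  by apply: vnd; rewrite in_setD1 zx.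
have [ax|ax] := eqVneq a x; have [bx|bx] := eqVneq b x.
- by move: ab; rewrite ax bx eqxx.
- by rewrite ax adjC; apply: near; rewrite ?in_setD1 ?bx.
- by rewrite bx; apply: near; rewrite ?in_setD1 ?ax.
- by apply: vcl; rewrite ?in_setD1 ?ax ?bx.
Qed.

Lemma removable_adj S x z : removable S x -> z \in S -> adj G z x ->
  dir G z x \/ und G z x.
Proof.
case=> _ xnd _ zS zx; move: (xnd z zS).
by case: (adj_cases zx) => [zx' _|->|zx' _]; [left| |right].
Qed.

Definition clique (A : {set T}) := {in A &, forall i j, i != j -> adj G i j}.

Section Closed.
Hypothesis G_closed : forall i j, ~ applicable G i j.

Lemma closedR1 i j k : und G i j -> dir G k i -> adj G k j.
Proof.
move=> ij ki; apply/negPn/negP => nkj; apply: (@G_closed i j).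
by left; split=> //; exists k.
Qed.

Lemma closedR2 i j k : und G i j -> dir G i k -> dir G k j -> False.
Proof. by move=> ij ik kj; apply: (@G_closed i j); right; left; split=> //; exists k. Qed.

Lemma closedR3 i j k l : und G i j -> und G i k -> und G i l -> dir G k j ->
  dir G l j -> k != l -> adj G k l.
Proof.
move=> ij ik il kj lj kl; apply/negPn/negP => nkl; apply: (@G_closed i j).
by right; right; left; split=> //; exists k, l; rewrite kl nkl.
Qed.

Lemma closedR4 i j k l : und G i j -> und G i k -> und G i l -> dir G k l ->
  dir G l j -> adj G k j.
Proof.
move=> ij ik il kl lj; apply/negPn/negP => nkj; apply: (@G_closed i j).
by right; right; right; split=> //; exists k, l.
Qed.

Lemma orient_rank_ext r : consistent_rank [set: T] r ->
  consistent_ext G (fun a b => adj G a b && (r a < r b)).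
Proof.
move=> [rinj rdir rund]; set D := fun a b => _.
have adjD : adj D =2 adj G.
  move=> a b; rewrite /adj /D (adjC b a) -/(adj G a b) -andb_orr.
  have [ab|] //= := boolP (adj G a b).
  rewrite -neq_ltn; apply: contraTneq ab => E.
  by rewrite (rinj a b _ _ E) ?inE // /adj G_irr.
have into_c u c : dir D u c -> dir G u c \/ und G u c.
  case/andP=> /andP[uc _] /negP ncu.
  case: (adj_cases uc) => [|cu|]; [by left | | by right].
  by case: ncu; rewrite /D adjC uc rdir ?inE.
split.
- by apply: (@dag_of_rank _ _ r) => a b /andP[].
- exact: adjD.
- by move=> a b ab; rewrite /D dir_adj // rdir ?inE.
- move=> a c b /and4P[ac bc ab nab]; rewrite adjD in nab.
  have rac : r a < r c by case/andP: ac => /andP[].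
  have rbc : r b < r c by case/andP: bc => /andP[].
  rewrite /vstruct ab nab !andbT.
  case: (into_c a c ac) => [Gac|Uac]; case: (into_c b c bc) => [Gbc|Ubc].
  + by rewrite Gac Gbc.
  + by move: nab; rewrite (closedR1 _ Gac) // undC.
  + by move: nab; rewrite adjC (closedR1 _ Gbc) // undC.
  + by move: (rund a b c (in_setT a) (in_setT b) (in_setT c) Uac Ubc ab nab); rewrite rac rbc.
Qed.

Hypothesis G_removable : forall S, S != set0 -> exists v, removable S v.

Lemma exists_consistent_rank S : exists r, consistent_rank S r.
Proof.
elim/setD1_ind: S => S IH.
have [->|/G_removable[t tR]] := eqVneq S set0.
  by exists (fun=> 0); apply: consistent_rank0.
have [r rS] := IH t (let: And3 tS _ _ := tR in tS).
by exists (rank_top S t r); apply: consistent_rank_top.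
Qed.

Definition front S c (In : {set T}) :=
  [/\ c \in S, In \subset S, {in In, forall i, und G i c}, clique In &
      forall o i, o \in S -> und G o c -> o \notin In -> i \in In -> ~~ dir G o i].

Definition front_rank S c (In : {set T}) r :=
  [/\ consistent_rank S r, {in In, forall i, r i < r c} &
      forall o, o \in S -> und G o c -> o \notin In -> r c < r o].

Lemma front_switch S x c0 : removable S x -> c0 \in S -> und G x c0 ->
  front (S :\ x) c0 [set z in S :\ x | und G z c0 & adj G z x].
Proof.
move=> xR c0S xc0; have [xS _ xcl] := xR.
have c0x : und G c0 x by rewrite undC.
split.
- by rewrite in_setD1 c0S andbT eq_sym und_neq.
- by apply/subsetP => z; rewrite inE => /andP[].
- by move=> i; rewrite inE => /and3P[].
- move=> i j; rewrite !inE => /and3P[/andP[_ iS] ic0 ix] /and3P[/andP[_ jS] jc0 jx] ij.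
  case: (removable_adj xR iS ix) => ix'; case: (removable_adj xR jS jx) => jx'.
  + by apply: (closedR3 (i:=c0) (j:=x)) => //; rewrite undC.
  + by apply: (closedR1 (i:=x)); rewrite // undC.
  + by rewrite adjC; apply: (closedR1 (i:=x)); rewrite // undC.
  + by apply: xcl.
- move=> o i /setD1P[ox oS] oc0; rewrite !inE ox oS oc0 /= => nox.
  move=> /and3P[/andP[_ iS] ic0 ix]; apply: contra nox => oi.
  case: (removable_adj xR iS ix) => ix'.
  + by apply: (closedR4 (i:=c0) (l:=i)); rewrite // undC.
  + exact: closedR1 ix' oi.
Qed.

Section FrontStep.
Variable S : {set T}.
Hypothesis IH : forall x, x \in S -> forall c In,
  front (S :\ x) c In -> exists r, front_rank (S :\ x) c In r.

(* Rank S :\ x with centre c0 and, below it, its undirected neighbours adjacent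
   to x; the top vertex is then either c0 or not adjacent to x. *)
Lemma removable_switch x c0 : removable S x -> c0 \in S -> und G x c0 ->
    {in S, forall c', und G x c' -> ~~ dir G c0 c'} ->
  removable S c0 \/ exists2 s, removable S s & (s != x) && ~~ adj G s x.
Proof.
move=> xR c0S xc0 nodir; have [xS xnd xcl] := xR.
have c0x : und G c0 x by rewrite undC.
have c0S' : c0 \in S :\ x by rewrite in_setD1 c0S andbT eq_sym und_neq.
have [r [rS rIn rOut]] := IH xS (front_switch xR c0S xc0).
have [rinj rdir _] := rS.
have below_c0 : {in S :\ x, forall z, adj G z x -> r z <= r c0}.
  move=> z zS' zxa; have /setD1P[_ zS] := zS'.
  have [-> //|zc0] := eqVneq z c0.
  have zx := removable_adj xR zS zxa.
  have zc0a : adj G z c0.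
    by case: zx => zx; [apply: (closedR1 xc0) | apply: xcl; rewrite // undC].
  case: (adj_cases zc0a) => [zc0d|c0z|zc0u].
  - exact/ltnW/rdir.
  - case: zx => zx; first by case: (closedR2 c0x c0z zx).
    by move: (nodir z zS); rewrite undC zx c0z => /(_ isT).
  - by apply/ltnW/rIn; rewrite inE zS' zc0u.
have [L LS' Lmax] := exists_argmax r c0S'.
have LR' := removable_rank_max rS LS' Lmax.
have [Lx|nLx] := boolP (adj G L x).
- have LE : L = c0.
    by apply: rinj => //; apply/eqP; rewrite eqn_leq below_c0 // Lmax.
  left; apply: removable_setD1_und xc0 _; first by rewrite -LE.
  move=> o oS' oc0; apply/negPn/negP => nox.
  have := rOut o oS' oc0; rewrite inE oS' oc0 (negbTE nox) => /(_ isT).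
  by rewrite ltnNge -LE Lmax.
- right; exists L; first exact: removable_setD1_nadj LR' nLx.
  by rewrite nLx andbT; have /setD1P[] := LS'.
Qed.

Variables (c : T) (In : {set T}).
Hypothesis frontS : front S c In.

Lemma front_rank_removable s : removable S s -> s \notin In -> s != c ->
  exists r, front_rank S c In r.
Proof.
move=> sR sIn sc; have [cS InS inc clq noOI] := frontS; have [sS _ _] := sR.
have cs : c != s by rewrite eq_sym.
have InS' : In \subset S :\ s.
  apply/subsetP => i iIn; rewrite in_setD1 (subsetP InS _ iIn) andbT.
  by apply: contraNneq sIn => <-.
have [r [rS rIn rOut]] : exists r, front_rank (S :\ s) c In r.
  apply: IH => //; split=> //; first by rewrite in_setD1 cs.
  by move=> o i /setD1P[_]; apply: noOI.
exists (rank_top S s r); split; first exact: consistent_rank_top.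
- move=> i iIn; have /setD1P[iNs _] := subsetP InS' _ iIn.
  by rewrite !rank_topE //; apply: rIn.
- move=> o oS oc oIn; rewrite rank_topE //.
  have [->|os] := eqVneq o s; first by apply: rank_top_gt; rewrite in_setD1 cs.
  by rewrite rank_topE //; apply: rOut; rewrite // in_setD1 os.
Qed.

Lemma front_rank_center : removable S c -> {in S, forall o, und G o c -> o \in In} ->
  exists r, front_rank S c In r.
Proof.
move=> cR allIn; have [_ InS inc _ _] := frontS.
have [r rS] := exists_consistent_rank (S :\ c).
exists (rank_top S c r); split; first exact: consistent_rank_top.
- move=> i iIn; have iNc := und_neq (inc i iIn).
  by rewrite rank_topE //; apply: rank_top_gt; rewrite in_setD1 iNc (subsetP InS).
- by move=> o oS oc /negP[]; apply: allIn.
Qed.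

Lemma removable_center_other o : removable S c -> o \in S -> und G o c -> o \notin In ->
  exists2 s, removable S s & (s \notin In) && (s != c).
Proof.
move=> cR oS oc oIn; have [cS _ inc _ noOI] := frontS.
have [r0 [_ r0dir _]] := exists_consistent_rank S.
pose Out := [set z in S | und G z c & z \notin In].
have oOut : o \in Out by rewrite inE oS oc.
have [c0 c0Out c0max] := exists_argmax r0 oOut.
move: c0Out; rewrite inE => /and3P[c0S c0c c0In].
have nodir : {in S, forall c', und G c c' -> ~~ dir G c0 c'}.
  move=> c' c'S cc'; apply/negP => c0c'.
  have [c'In|c'In] := boolP (c' \in In).
    by move: (noOI _ _ c0S c0c c0In c'In); rewrite c0c'.
  have := c0max c'; rewrite inE c'S undC cc' c'In => /(_ isT).
  by rewrite leqNgt r0dir.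
have cc0 : und G c c0 by rewrite undC.
have [c0R|[s sR /andP[sc nsc]]] := removable_switch cR c0S cc0 nodir.
  by exists c0; rewrite // c0In und_neq.
exists s; rewrite // sc andbT; apply: contra nsc => sIn.
by rewrite und_adj // inc.
Qed.

Lemma removable_front_other t : removable S t -> t \in In ->
  removable S c \/ exists2 s, removable S s & (s \notin In) && (s != c).
Proof.
move=> tR tIn; have [cS _ inc clq _] := frontS; have [tS _ tcl] := tR.
have tc := inc t tIn.
have [r0 [_ r0dir _]] := exists_consistent_rank S.
pose Z := [set z in S | und G z t & (z == c) || dir G c z].
have cZ : c \in Z by rewrite inE cS eqxx undC tc.
have [c0 c0Z c0max] := exists_argmax r0 cZ.
move: c0Z; rewrite inE => /and3P[c0S c0t c0c].
have nodir : {in S, forall c', und G t c' -> ~~ dir G c0 c'}.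
  move=> c' c'S tc'; apply/negP => c0c'.
  have c'c : c' != c.
    apply: contraTneq c0c' => ->.
    by case/orP: c0c => [/eqP->|/dir_asym->]; rewrite ?/dir ?G_irr.
  have c'cA : adj G c' c by apply: tcl; rewrite // undC.
  case: (adj_cases c'cA) => [c'cd|cc'|c'cu].
  - case/orP: c0c => [/eqP ec0|cc0]; first by move: c0c'; rewrite ec0 dir_asym.
    have := ltn_trans (r0dir _ _ cS c0S cc0) (r0dir _ _ c0S c'S c0c').
    by rewrite ltnNge ltnW // r0dir.
  - have := c0max c'; rewrite inE c'S undC tc' cc' orbT => /(_ isT).
    by rewrite leqNgt r0dir.
  - case/orP: c0c => [/eqP ec0|cc0]; first by move: c0c'; rewrite ec0 und_dirF // undC.
    by apply: (closedR2 (i:=c) (j:=c') (k:=c0)); rewrite // undC.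
have tc0 : und G t c0 by rewrite undC.
have [c0R|[s sR /andP[st nst]]] := removable_switch tR c0S tc0 nodir.
  case/orP: c0c => [/eqP<-|cc0]; [by left | right; exists c0 => //].
  rewrite eq_sym dir_neq // andbT; apply: contraTN cc0 => c0In.
  by rewrite und_dirF // undC inc.
right; exists s => //; apply/andP; split.
  by apply: contra nst => sIn; apply: clq.
by apply: contraNneq nst => ->; rewrite adjC und_adj.
Qed.

Lemma front_rank_step : exists r, front_rank S c In r.
Proof.
have [cS _ _ _ _] := frontS.
have [t tR] : exists t, removable S t by apply: G_removable; apply/set0Pn; exists c.
have [cR|[s sR /andP[sIn sc]]] : removable S c \/
    exists2 s, removable S s & (s \notin In) && (s != c).
- have [tIn|tIn] := boolP (t \in In); first exact: removable_front_other tR tIn.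
  have [<-|tc] := eqVneq t c; [by left | by right; exists t; rewrite ?tIn].
- case: (pickP [pred o in S | und G o c && (o \notin In)]) => [o|noOut].
    case/and3P=> oS oc oIn; have [s sR /andP[sIn sc]] := removable_center_other cR oS oc oIn.
    exact: front_rank_removable sR sIn sc.
  apply: (front_rank_center cR) => o oS oc; apply/negPn/negP => oIn.
  by have := noOut o; rewrite /= oS oc oIn.
- exact: front_rank_removable sR sIn sc.
Qed.

End FrontStep.

Lemma front_rank_exists S c In : front S c In -> exists r, front_rank S c In r.
Proof. by elim/setD1_ind: S c In => S IH c In; apply: front_rank_step. Qed.

Lemma removable_avoid S w u : w \in S -> u \in S -> und G w u ->
  exists2 t, removable S t & t != w.
Proof.
move=> wS uS wu.
have [r [rS _ rOut]] : exists r, front_rank S w set0 r.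
  apply: front_rank_exists; split=> //; first exact: sub0set.
  - by move=> i; rewrite inE.
  - by move=> i j; rewrite inE.
  - by move=> o i _ _ _; rewrite inE.
have [t tS tmax] := exists_argmax r uS.
exists t; first exact: removable_rank_max rS tS tmax.
have uw : und G u w by rewrite undC.
have u0 : u \notin set0 by rewrite inE.
apply: contraTneq (rOut u uS uw u0) => <-.
by rewrite -leqNgt tmax.
Qed.

Definition und_in S w := (w \in S) && [exists z in S, und G w z].

Definition below_und S r w := w \in S -> {in S, forall z, und G w z -> r w < r z}.

Lemma below_und_top S t r w : (und_in S w -> t != w) ->
  below_und (S :\ t) r w -> below_und S (rank_top S t r) w.
Proof.
move=> tw wr wS z zS wz.
have wt : w != t.
  by rewrite eq_sym; apply: tw; rewrite /und_in wS; apply/existsP; exists z; rewrite zS.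
rewrite rank_topE //; have [->|zt] := eqVneq z t.
  by apply: rank_top_gt; rewrite in_setD1 wt.
by rewrite rank_topE //; apply: wr; rewrite ?in_setD1 ?wt ?zt.
Qed.

Lemma removable_avoid_edge S x y : dir G x y -> S != set0 ->
  exists2 t, removable S t & (und_in S x ==> (t != x)) && (und_in S y ==> (t != y)).
Proof.
move=> xy /G_removable[t0 t0R].
have [/andP[yS /existsP[z /andP[zS yz]]]|ny] := boolP (und_in S y).
  have [t tR ty] := removable_avoid yS zS yz; exists t => //.
  rewrite ty implybT andbT; apply/implyP => _; have [_ tnd _] := tR.
  by apply: contraTneq xy => <-; apply: tnd.
have [/andP[xS /existsP[z /andP[zS xz]]]|nx] := boolP (und_in S x).
  by have [t tR tx] := removable_avoid xS zS xz; exists t; rewrite // tx.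
by exists t0.
Qed.

Lemma rank_below_edge x y S : dir G x y ->
  exists r, [/\ consistent_rank S r, below_und S r x & below_und S r y].
Proof.
move=> xy; elim/setD1_ind: S => S IH.
have [->|Sn0] := eqVneq S set0.
  by exists (fun=> 0); split; [exact: consistent_rank0 | rewrite /below_und inE ..].
have [t tR /andP[/implyP tx /implyP ty]] := removable_avoid_edge xy Sn0.
have [r [rS rx ry]] := IH t (let: And3 tS _ _ := tR in tS).
by exists (rank_top S t r); split; [exact: consistent_rank_top | exact: below_und_top ..].
Qed.

Lemma closure_extension x y : dir G x y -> exists D : rel T, consistent_ext G D /\
  (forall z, und G x z -> D x z) /\ (forall z, und G y z -> D y z).
Proof.
move=> xy; have [r [rT rx ry]] := rank_below_edge [set: T] xy.
exists (fun a b => adj G a b && (r a < r b)); split; first exact: orient_rank_ext.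
by split=> z wz; rewrite und_adj //=; [apply: rx | apply: ry]; rewrite ?inE.
Qed.

End Closed.
End Pdag.

Section Compatible.
Variables (T : finType) (D : rel T).
Hypothesis dagD : dag D.
Implicit Types g : rel T.

Lemma dag_irr : irreflexive D.
Proof. by move=> a; apply/negP => aa; move: (dagD aa); rewrite connect0. Qed.

Lemma dag_asym a b : D a b -> D b a = false.
Proof. by move=> ab; apply/negP => ba; move: (dagD ab); rewrite connect1. Qed.

Lemma dag_no_3cycle a b c : D a b -> D b c -> D c a -> False.
Proof.
by move=> ab bc ca; move: (dagD ab); rewrite (connect_trans (connect1 bc) (connect1 ca)).
Qed.

Lemma adj_pattern : adj (pattern_of D) =2 adj D.
Proof.
move=> a b; rewrite /adj /pattern_of -/(adj D a b) -/(adj D b a) (adjC D b a) -andb_orr.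
have [_|//] := boolP (adj D a b); rewrite /in_vstruct.
case Dab: (D a b); case Dba: (D b a); rewrite ?orbT //.
by move: (dag_asym Dab); rewrite Dba.
Qed.

Lemma edge_pattern a b : D a b -> pattern_of D a b.
Proof. by move=> ab; rewrite /pattern_of /adj ab /= /in_vstruct dag_asym. Qed.

(* The invariant preserved by the Meek rules, which are sound for D. *)
Definition compatible g :=
  [/\ subrel g (pattern_of D), adj g =2 adj D & subrel (dir g) D].

Lemma compatible_eq g g' : g =2 g' -> compatible g -> compatible g'.
Proof.
move=> E [gP gadj gdir]; split=> a b.
- by rewrite -E; apply: gP.
- by rewrite /adj -!E; apply: gadj.
- by rewrite /dir -!E; apply: gdir.
Qed.

Lemma compatible_und g a b : compatible g -> und g a b -> D a b \/ D b a.
Proof.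
case=> _ gadj _ /andP[ab _]; have : adj D a b by rewrite -gadj /adj ab.
by case/orP; [left | right].
Qed.

Lemma compatible_und_orient g a b c :
  compatible g -> und g a b -> D b c -> D c a -> D b a.
Proof.
by move=> gc ab bc ca; case: (compatible_und gc ab) => // ab'; case: (dag_no_3cycle ab' bc ca).
Qed.

Lemma compatible_und_shielded g a b c :
  compatible g -> und g a b -> D a b -> D c b -> c != a -> adj g a c.
Proof.
case=> gP gadj _ /andP[_ ba] ab cb ca; rewrite gadj; apply/negPn/negP => nac.
have /andP[_] := gP _ _ ba; rewrite /in_vstruct ab /=; case/negP.
by apply/existsP; exists c; rewrite cb ca.
Qed.

Lemma meek_sound g i j : compatible g -> applicable g i j -> D i j.
Proof.
move=> gc app; have [_ _ gdir] := gc.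
have ij : und g i j by case: app => [[]|[[]|[[]|[]]]].
have [//|ji] := compatible_und gc ij; exfalso.
have ji' : und g j i by rewrite undC.
case: app => [[_ [k [ki nkj]]]|[[_ [k [ik kj]]]|
  [[_ [k [l [ik il kj lj /andP[kl nkl]]]]]|[_ [k [l [ik il kl [lj nkj]]]]]]]].
- case/negP: nkj; rewrite adjC; apply: compatible_und_shielded gc ji' ji (gdir _ _ ki) _.
  by apply: contraTneq ki => ->; rewrite und_dirF // undC.
- exact: dag_no_3cycle (gdir _ _ ik) (gdir _ _ kj) ji.
- have ki := compatible_und_orient gc ik (gdir _ _ kj) ji.
  have li := compatible_und_orient gc il (gdir _ _ lj) ji.
  case/negP: nkl; apply: compatible_und_shielded gc _ ki li _; by rewrite 1?undC 1?eq_sym.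
- have li := compatible_und_orient gc il (gdir _ _ lj) ji.
  have ki := compatible_und_orient gc ik (gdir _ _ kl) li.
  case/negP: nkj; apply: compatible_und_shielded gc _ ki ji _; first by rewrite undC.
  by apply: contraTneq lj => ->; rewrite dir_asym.
Qed.

Lemma compatible_orient g i j : compatible g -> applicable g i j ->
  compatible (orient g i j).
Proof.
move=> gc app; have ij := meek_sound gc app; have [gP gadj gdir] := gc.
have /andP[gij gji] : und g i j by case: app => [[]|[[]|[[]|[]]]].
have iNj : i != j by apply: contraTneq ij => ->; rewrite dag_irr.
split=> a b.
- by rewrite /orient => /andP[/gP].
- rewrite -gadj /adj /orient.
  have jNi : j != i by rewrite eq_sym.
  have [->|aj] := eqVneq a j; have [->|bi] := eqVneq b i.
  + by rewrite ?eqxx ?(negbTE iNj) gij gji /= ?orbT.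
  + by rewrite ?eqxx ?(negbTE bi) ?(negbTE jNi) /= ?andbF ?andbT.
  + by rewrite ?eqxx ?(negbTE aj) ?(negbTE iNj) /= ?andbF ?andbT.
  + rewrite ?(negbTE aj) /= ?andbT.
    have [->|bj] := eqVneq b j; have [->|ai] := eqVneq a i => //=; rewrite ?andbT //.
    by rewrite gij.
- rewrite /dir /orient; have [->|ai] := eqVneq a i; have [->|bj] := eqVneq b j => //=;
    by rewrite andbT => /andP[/andP[gab _] nb]; apply: gdir; rewrite /dir gab.
Qed.

Lemma compatible_reach g g' : meek_reach g g' -> compatible g -> compatible g'.
Proof.
elim=> // g1 g2 g3 [i [j [app E]]] _ IH g1c; apply: IH.
by apply: compatible_eq (compatible_orient g1c app) => a b; rewrite E.
Qed.

Lemma compatible_orientK P K : pattern_of D =2 P -> subrel K D ->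
  compatible (orientK P K).
Proof.
move=> patD KD; split=> a b.
- by rewrite /orientK -patD => /andP[].
- rewrite -adj_pattern /adj /orientK -!patD.
  case Kab: (K a b); case Kba: (K b a) => /=; rewrite ?andbT ?andbF ?orbF //.
  + by move: (dag_asym (KD _ _ Kab)); rewrite (KD _ _ Kba).
  + by rewrite edge_pattern // KD.
  + by rewrite edge_pattern ?orbT // KD.
- rewrite /dir /orientK -!patD.
  case Kab: (K a b); first by rewrite KD.
  rewrite andbT => /andP[/andP[Pab _] nPba]; move: Pab nPba.
  rewrite /pattern_of /adj => /andP[Aab _].
  by rewrite orbC Aab /= negbK => /andP[].
Qed.

Lemma compatible_irr g : compatible g -> irreflexive g.
Proof.
by case=> _ gadj _ a; apply/negP => aa; move: (gadj a a); rewrite /adj aa dag_irr.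
Qed.

Lemma compatible_removable g : compatible g ->
  forall S : {set T}, S != set0 -> exists v, removable g S v.
Proof.
move=> gc S /set0Pn[z0 z0S]; have [_ _ gdir] := gc.
pose anc u := [set w | connect D w u].
have [v vS vmax] := exists_argmax (fun u => #|anc u|) z0S.
have vD : {in S, forall z, ~~ D v z}.
  move=> z zS; apply/negP => vz.
  have : #|anc v| < #|anc z|.
    apply: proper_card; apply/properP; split.
      by apply/subsetP => w; rewrite !inE => /connect_trans; apply; apply: connect1.
    by exists z; rewrite !inE ?connect0 // (negbTE (dagD vz)).
  by rewrite ltnNge vmax.
exists v; split=> // [z zS|a b aS bS av bv ab].
  by apply: contra (vD z zS); apply: gdir.
have into_v u : u \in S -> und g u v -> D u v.
  by move=> uS uv; case: (compatible_und gc uv) => // vu; move: (vD u uS); rewrite vu.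
apply: compatible_und_shielded gc av (into_v a aS av) (into_v b bS bv) _.
by rewrite eq_sym.
Qed.

End Compatible.

Unset Implicit Arguments.

Theorem mainTheorem17 (T : finType) (P K G : rel T) (x y : T) :
  is_pattern P -> consistent_bk P K -> is_closure P K G -> dir G x y ->
  exists D : rel T, consistent_ext G D /\
    (forall z, und G x z -> D x z) /\ (forall z, und G y z -> D y z).
Proof.
move=> _ [_ [D0 [dagD patD KD]]] [reach closed] xy.
have GD := compatible_reach dagD reach (compatible_orientK dagD patD KD).
exact: (closure_extension (compatible_irr dagD GD) closed (compatible_removable dagD GD) xy).
Qed.
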